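(* Let $Z\subset\mathbb{S}_8$ be a finite nonempty set of points. Then $\alpha(Z)=\alpha(2Z)=1$ if and only if $Z=\{Q\}$ for a single point $Q$ such that $f(Q)$ is the singular point of an irreducible cubic curve $F$ passing through $P_1,\dots,P_8$ and $f(Q)\neq P_i$ for all $i\in\{1,\dots,8\}$.
   Context: Let $P_1,\dots,P_8\in\mathbb{P}^2(\mathbb{C})$ be eight general points and $f\colon\mathbb{S}_8\to\mathbb{P}^2$ the blow-up at them, with exceptional curves $E_i=f^{-1}(P_i)$; let $H$ be the pullback of the class of a line and $\mathbb{L}_8=3H-E_1-\dots-E_8=-K_{\mathbb{S}_8}$. For a finite set $Z\subset\mathbb{S}_8$ with ideal sheaf $\mathcal{I}_Z$ and a positive integer $m$, $\alpha(mZ)=\min\{d\ge 0:\ H^0(\mathbb{S}_8,d\mathbb{L}_8\otimes\mathcal{I}_Z^{(m)})\neq 0\}$, i.e. the least $d$ such that some effective divisor $D\in|d\mathbb{L}_8|$ has multiplicity at least $m$ at every point of $Z$. *)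

From HB Require Import structures.
From mathcomp Require Import all_boot all_algebra.
From mathcomp Require Import Rstruct.
From mathcomp Require Import complex.
From mathcomp Require Import mpoly.

Set Implicit Arguments.
Unset Strict Implicit.
Unset Printing Implicit Defensive.

Import GRing.Theory.
Local Open Scope ring_scope.

Definition C : numClosedFieldType := (Rdefinitions.R)[i].

(* homogeneous coordinates: vectors of C^3 *)
Definition vec := 'I_3 -> C.

Definition i0 : 'I_3 := @Ordinal 3 0 isT.
Definition i1 : 'I_3 := @Ordinal 3 1 isT.
Definition i2 : 'I_3 := @Ordinal 3 2 isT.

Definition nz (v : vec) : Prop := exists k, v k != 0.

Definition proj_eq (p q : vec) : Prop :=
  exists c : C, c != 0 /\ forall k, q k = c * p k.

Definition det3 (a b c : vec) : C :=
  a i0 * (b i1 * c i2 - b i2 * c i1)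
  - a i1 * (b i0 * c i2 - b i2 * c i0)
  + a i2 * (b i0 * c i1 - b i1 * c i0).

(* affine chart of P^2 centred at [a]:  (x,y) |-> [a + x w + y u],
   for (a,w,u) a basis of C^3 *)
Definition chart (a w u : vec) : 3.-tuple {mpoly C[2]} :=
  [tuple (a k)%:MP + w k *: 'X_0 + u k *: 'X_1 | k < 3].

(* chart of the blow-up of P^2 at [a] around the point of the exceptional
   curve corresponding to the tangent direction w:
   (s,t) |-> (x,y) = (s, s t) |-> [a + s w + s t u] *)
Definition bchart (a w u : vec) : 3.-tuple {mpoly C[2]} :=
  [tuple (a k)%:MP + w k *: 'X_0 + u k *: ('X_0 * 'X_1) | k < 3].

Definition ord_ge (G : {mpoly C[2]}) (m : nat) : Prop :=
  forall mon : 'X_{1..2}, (mdeg mon < m)%N -> G@_mon = 0.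

Definition pmult_ge (F : {mpoly C[3]}) (p : vec) (m : nat) : Prop :=
  forall w u : vec, det3 p w u != 0 -> ord_ge (comp_mpoly (chart p w u) F) m.

(* Points of S_8 (P = the 8 blown-up points):
   Off p   : the point f^{-1}([p]), [p] different from all [P i];
   Exc i w : the point of E_i = f^{-1}(P_i) given by the tangent direction
             of the line through [P i] and [w]. *)
Inductive spt : Type :=
| Off of vec
| Exc of 'I_8 & vec.

Definition valid_pt (P : 'I_8 -> vec) (q : spt) : Prop :=
  match q with
  | Off p => nz p /\ forall i, ~ proj_eq (P i) p
  | Exc i w => ~ exists c : C, forall k, w k = c * P i k
  end.

Definition pt_eq (P : 'I_8 -> vec) (q1 q2 : spt) : Prop :=
  match q1, q2 with
  | Off p, Off p' => proj_eq p p'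
  | Exc i w, Exc j v =>
      i = j /\ exists a b : C, a != 0 /\ forall k, v k = a * w k + b * P i k
  | _, _ => False
  end.

Definition fpt (P : 'I_8 -> vec) (q : spt) : vec :=
  match q with Off p => p | Exc i _ => P i end.

(* Elements of H^0(S_8, d L_8) up to scalars = effective divisors D in |d L_8|:
   D = f^*(F = 0) - d (E_1 + ... + E_8) with F a nonzero form of degree 3d
   having multiplicity >= d at every P_i. *)
Definition section (P : 'I_8 -> vec) (d : nat) (F : {mpoly C[3]}) : Prop :=
  F \is (3 * d)%N.-homog /\ F != 0 /\ forall i, pmult_ge F (P i) d.

(* At a point of E_i, D is locally  G(s,t) / s^d  with G = F o bchart, and
   G is divisible by s^d; ord(G / s^d) >= m  iff  ord(G) >= m + d. *)
Definition smult_ge (P : 'I_8 -> vec) (d : nat) (F : {mpoly C[3]})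
    (q : spt) (m : nat) : Prop :=
  match q with
  | Off p => pmult_ge F p m
  | Exc i w => forall u : vec, det3 (P i) w u != 0 ->
                 ord_ge (comp_mpoly (bchart (P i) w u) F) (m + d)
  end.

(* H^0(S_8, d L_8 (x) I_Z^(m)) <> 0 *)
Definition has_curve (P : 'I_8 -> vec) (d m : nat) (Z : seq spt) : Prop :=
  exists F, section P d F /\ forall q, List.In q Z -> smult_ge P d F q m.

(* alpha(mZ) = a *)
Definition is_alpha (P : 'I_8 -> vec) (m : nat) (Z : seq spt) (a : nat) : Prop :=
  has_curve P a m Z /\ forall d, (d < a)%N -> ~ has_curve P d m Z.

Definition irreducible_cubic (F : {mpoly C[3]}) : Prop :=
  F \is 3.-homog /\ F != 0 /\
  forall G H : {mpoly C[3]}, F = G * H -> (msize G <= 1)%N \/ (msize H <= 1)%N.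

Definition coords (P : 'I_8 -> vec) : 'I_24 -> C :=
  fun k => P (inord (k %/ 3)) (inord (k %% 3)).

From HB Require Import structures.
From mathcomp Require Import all_boot all_algebra.
From mathcomp Require Import Rstruct complex mpoly.
From mathcomp Require Import ring zify.
From Stdlib Require Import FunctionalExtensionality Classical_Prop.

Set Implicit Arguments.
Unset Strict Implicit.
Unset Printing Implicit Defensive.

Import GRing.Theory.
Local Open Scope ring_scope.

(* For general points three conditions hold, each the non-vanishing of an
   interpolation determinant in the coordinates of the P_i (the polynomial G is
   their product, nonzero because each condition holds for one explicit
   configuration): no three P_i are collinear, no six lie on a conic, and no
   nonzero cubic through the eight points is singular at one of them.
   A divisor in |L_8| of multiplicity >= 2 along Z is a cubic F through the P_i,
   singular at the points of Z.  By the third condition these points are off the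
   exceptional curves; by the first two F is irreducible, since otherwise the P_i
   would lie on a line and a conic.  An irreducible cubic has at most one singular
   point: the line through two of them meets F with multiplicity four, hence is a
   component.  Conversely such an F realises alpha(Z) = alpha(2Z) = 1, as
   |0 L_8| only contains the zero divisor. *)

(** * Calculus of multivariate polynomials *)

Section MpolyCalculus.
Variable R : comNzRingType.

Lemma mpoly_ring_ind n (P : {mpoly R[n]} -> Prop) :
  (forall c, P c%:MP) -> (forall i, P 'X_i) ->
  (forall p q, P p -> P q -> P (p + q)) -> (forall p q, P p -> P q -> P (p * q)) ->
  forall p, P p.
Proof.
move=> hC hX hD hM.
have hXm m : P 'X_[m].
  rewrite mpolyXE_id; apply: big_ind => [|p q|i _]; [by rewrite -mpolyC1 | exact: hM |].
  by elim: (m i) => [|e ih]; rewrite ?expr0 -?mpolyC1 // exprS; apply: hM.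
elim/mpolyind => [|c m p _ _ hp]; first by rewrite -mpolyC0.
by apply: hD => //; rewrite -mul_mpolyC; apply: hM.
Qed.

Lemma mderivXU n (i j : 'I_n) : mderiv j ('X_i : {mpoly R[n]}) = (i == j)%:R%:MP.
Proof.
rewrite mderivX mnm1E; have [->|_] := eqVneq i j; last by rewrite scale0r mpolyC0.
have -> : (U_(j) - U_(j))%MM = 0%MM by apply/mnmP => l; rewrite mnmBE subnn mnm0E.
by rewrite mpolyX0 scale1r mpolyC1.
Qed.

Lemma comp_mpolyM n k (t : n.-tuple {mpoly R[k]}) (p q : {mpoly R[n]}) :
  (p * q) \mPo t = (p \mPo t) * (q \mPo t).
Proof. exact: (comp_mpoly_is_multiplicative t).1. Qed.

Lemma mderiv_comp n k (t : n.-tuple {mpoly R[k]}) (i : 'I_k) (p : {mpoly R[n]}) :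
  mderiv i (p \mPo t) = \sum_(j < n) mderiv i (tnth t j) * (mderiv j p \mPo t).
Proof.
elim/mpoly_ring_ind: p => [c|l|p q hp hq|p q hp hq].
- by rewrite comp_mpolyC mderivC big1 // => j _; rewrite mderivC comp_mpoly0 mulr0.
- rewrite comp_mpolyXU -tnth_nth (bigD1 l) //= big1 ?addr0.
    by rewrite mderivXU eqxx comp_mpolyC mpolyC1 mulr1.
  by move=> j /negbTE ne; rewrite mderivXU eq_sym ne mpolyC0 comp_mpoly0 mulr0.
- rewrite !raddfD /= hp hq -big_split /=; apply: eq_bigr => j _.
  by rewrite mderivD comp_mpolyD mulrDr.
- rewrite comp_mpolyM mderivM hp hq mulr_suml mulr_sumr -big_split /=.
  apply: eq_bigr => j _; rewrite mderivM comp_mpolyD !comp_mpolyM.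
  move: (mderiv i _) (mderiv j p \mPo t) (mderiv j q \mPo t) (p \mPo t) (q \mPo t) => a b c d e.
  ring.
Qed.

Lemma mcoeff0_meval n (p : {mpoly R[n]}) : p@_0 = p.@[fun _ => 0].
Proof.
elim/mpoly_ring_ind: p => [c|l|p q hp hq|p q hp hq].
- by rewrite mcoeffC eqxx mulr1 mevalC.
- by rewrite mcoeffX mevalXU; case: eqP => // /mnmP /(_ l); rewrite mnm1E eqxx mnm0E.
- by rewrite mcoeffD mevalD hp hq.
- by rewrite (mcoeff0_is_multiplicative _ _).1 mevalM hp hq.
Qed.

Lemma mcoeffU_mderiv n (p : {mpoly R[n]}) (j : 'I_n) : p@_(U_(j)) = (mderiv j p)@_0.
Proof. by rewrite mcoeff_mderiv add0m mnm0E mulr1n. Qed.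

Lemma mcoeffUU_mderiv n (p : {mpoly R[n]}) (j l : 'I_n) : j != l ->
  p@_(U_(j) + U_(l)) = (mderiv l (mderiv j p))@_0.
Proof.
move=> ne; rewrite !mcoeff_mderiv add0m mnm0E mulr1n mnm1E.
by rewrite eq_sym (negbTE ne) mulr1n addmC.
Qed.

Lemma comp_mpolyB_dvd n k (U T : n.-tuple {mpoly R[k]}) (L : {mpoly R[k]})
    (g : 'I_n -> {mpoly R[k]}) :
  (forall l, tnth U l - tnth T l = L * g l) ->
  forall p : {mpoly R[n]}, exists q, (p \mPo U) - (p \mPo T) = L * q.
Proof.
move=> hUT; elim/mpoly_ring_ind => [c|l|p q [Rp hp] [Rq hq]|p q [Rp hp] [Rq hq]].
- by exists 0; rewrite !comp_mpolyC subrr mulr0.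
- by exists (g l); rewrite !comp_mpolyXU -!tnth_nth hUT.
- exists (Rp + Rq); rewrite !comp_mpolyD mulrDr -hp -hq.
  move: (p \mPo U) (p \mPo T) (q \mPo U) (q \mPo T) => a b c d; ring.
- exists (Rp * (q \mPo U) + (p \mPo T) * Rq); rewrite !comp_mpolyM.
  move: hp hq; move: (p \mPo U) (p \mPo T) (q \mPo U) (q \mPo T) => a b c d hp hq.
  have -> : a * c - b * d = (a - b) * c + b * (c - d) by ring.
  by rewrite hp hq; ring.
Qed.

End MpolyCalculus.

(** * Ternary forms *)

Lemma ord3P (P : 'I_3 -> Prop) : P i0 -> P i1 -> P i2 -> forall i, P i.
Proof.
move=> h0 h1 h2 [[|[|[|//]]] hi].
- by have -> : Ordinal hi = i0 by apply: val_inj.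
- by have -> : Ordinal hi = i1 by apply: val_inj.
- by have -> : Ordinal hi = i2 by apply: val_inj.
Qed.

Lemma big_ord3 (T : Type) (idx : T) (op : Monoid.law idx) (f : 'I_3 -> T) :
  \big[op/idx]_(i < 3) f i = op (op (f i0) (f i1)) (f i2).
Proof.
rewrite !big_ord_recr big_ord0 /= Monoid.mul1m.
by congr (op (op (f _) (f _)) (f _)); apply: val_inj.
Qed.

Definition mnm3 (a b c : nat) : 'X_{1..3} := [multinom [tuple a; b; c]].

Definition deg1_mnms := [:: mnm3 1 0 0; mnm3 0 1 0; mnm3 0 0 1].
Definition deg2_mnms :=
  [:: mnm3 2 0 0; mnm3 0 2 0; mnm3 0 0 2; mnm3 1 1 0; mnm3 0 1 1; mnm3 1 0 1].
Definition deg3_mnms :=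
  [:: mnm3 3 0 0; mnm3 2 1 0; mnm3 2 0 1; mnm3 1 2 0; mnm3 1 1 1;
      mnm3 1 0 2; mnm3 0 3 0; mnm3 0 2 1; mnm3 0 1 2; mnm3 0 0 3].

Lemma mnm3_eta (m : 'X_{1..3}) : m = mnm3 (m i0) (m i1) (m i2).
Proof. by apply/mnmP; apply: ord3P. Qed.

Lemma mdeg3 (m : 'X_{1..3}) : mdeg m = (m i0 + m i1 + m i2)%N.
Proof. by rewrite mdegE big_ord3. Qed.

Lemma deg1_mnmsP m : mdeg m = 1%N -> m \in deg1_mnms.
Proof.
move=> h; rewrite (mnm3_eta m); move: h; rewrite mdeg3.
move: (m i0) (m i1) (m i2) => a b c /eqP.
by case: a => [|[|a]]; case: b => [|[|b]]; case: c => [|[|c]].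
Qed.

Lemma deg2_mnmsP m : mdeg m = 2%N -> m \in deg2_mnms.
Proof.
move=> h; rewrite (mnm3_eta m); move: h; rewrite mdeg3.
move: (m i0) (m i1) (m i2) => a b c /eqP.
by case: a => [|[|[|a]]]; case: b => [|[|[|b]]]; case: c => [|[|[|c]]].
Qed.

Lemma deg3_mnmsP m : mdeg m = 3%N -> m \in deg3_mnms.
Proof.
move=> h; rewrite (mnm3_eta m); move: h; rewrite mdeg3.
move: (m i0) (m i1) (m i2) => a b c /eqP.
by case: a => [|[|[|[|a]]]]; case: b => [|[|[|[|b]]]]; case: c => [|[|[|[|c]]]].
Qed.

Section Forms.
Variable R : comNzRingType.
Implicit Types (ms : seq 'X_{1..3}) (c : 'X_{1..3} -> R).

Lemma mcoeff_sum_mnms ms c m : uniq ms ->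
  (\sum_(m' <- ms) (c m')%:MP * 'X_[m'] : {mpoly R[3]})@_m = if m \in ms then c m else 0.
Proof.
move=> u; rewrite raddf_sum /=.
rewrite (eq_bigr (fun m' => c m' * (m' == m)%:R)); last first.
  by move=> m' _; rewrite mcoeffCM mcoeffX.
case: ifP => hm.
  by rewrite (bigD1_seq m) //= eqxx mulr1 big1 ?addr0 // => m' /negbTE ->; rewrite mulr0.
rewrite big_seq big1 // => m' hm'; case: eqP => [e|]; last by rewrite mulr0.
by move: hm; rewrite -e hm'.
Qed.

Lemma dhomog_sum_mnms (F : {mpoly R[3]}) d ms : uniq ms ->
  (forall m, mdeg m = d -> m \in ms) -> F \is d.-homog ->
  F = \sum_(m <- ms) (F@_m)%:MP * 'X_[m].
Proof.
move=> u cov h; apply/mpolyP => m; rewrite mcoeff_sum_mnms //; case: ifP => // hm.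
by apply: (dhomog_nemf_coeff h); apply/eqP => e; rewrite cov in hm.
Qed.

End Forms.

(* A ternary form given by its coefficients [c] on the monomials [ms], evaluated in an
   arbitrary commutative ring: identities between such evaluations reduce to
   polynomial identities in the coefficients, which [ring] checks. *)
Definition monom (R : comPzRingType) (m : 'X_{1..3}) (y : 'I_3 -> R) : R :=
  y i0 ^+ m i0 * y i1 ^+ m i1 * y i2 ^+ m i2.
Definition form3 (R : comPzRingType) ms (c : 'X_{1..3} -> R) (y : 'I_3 -> R) : R :=
  \sum_(m <- ms) c m * monom m y.
Definition form3_deriv (R : comPzRingType) ms (c : 'X_{1..3} -> R) (k : 'I_3)
    (y : 'I_3 -> R) : R :=
  \sum_(m <- ms) c m * (m k)%:R * monom (m - U_(k))%MM y.

Lemma mnm3_sub0 a b c : (mnm3 a b c - U_(i0))%MM = mnm3 a.-1 b c.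
Proof. by apply/mnmP; apply: ord3P; rewrite mnmBE mnm1E /= ?subn0 ?subn1. Qed.
Lemma mnm3_sub1 a b c : (mnm3 a b c - U_(i1))%MM = mnm3 a b.-1 c.
Proof. by apply/mnmP; apply: ord3P; rewrite mnmBE mnm1E /= ?subn0 ?subn1. Qed.
Lemma mnm3_sub2 a b c : (mnm3 a b c - U_(i2))%MM = mnm3 a b c.-1.
Proof. by apply/mnmP; apply: ord3P; rewrite mnmBE mnm1E /= ?subn0 ?subn1. Qed.

Lemma monom_mnm3 (R : comPzRingType) a b c (y : 'I_3 -> R) :
  monom (mnm3 a b c) y = y i0 ^+ a * y i1 ^+ b * y i2 ^+ c.
Proof. by []. Qed.
Lemma mnm3E0 a b c : mnm3 a b c i0 = a. Proof. by []. Qed.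
Lemma mnm3E1 a b c : mnm3 a b c i1 = b. Proof. by []. Qed.
Lemma mnm3E2 a b c : mnm3 a b c i2 = c. Proof. by []. Qed.

Ltac unfold_form :=
  rewrite /form3 /form3_deriv ?big_cons ?big_nil ?mnm3_sub0 ?mnm3_sub1 ?mnm3_sub2
    ?monom_mnm3 ?mnm3E0 ?mnm3E1 ?mnm3E2 /=.

Section FormIdentities.
Variable R : comPzRingType.
Implicit Types (a b c r x y g : 'I_3 -> R) (cf : 'X_{1..3} -> R).

Lemma form3_ext ms cf y y' : y =1 y' -> form3 ms cf y = form3 ms cf y'.
Proof. by move=> h; apply: eq_bigr => m _; rewrite /monom !h. Qed.

Lemma cubic_euler cf y :
  \sum_(k < 3) y k * form3_deriv deg3_mnms cf k y = 3%:R * form3 deg3_mnms cf y.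
Proof. rewrite big_ord3; unfold_form; ring. Qed.

Lemma cubic_scale cf s y :
  form3 deg3_mnms cf (fun k => s * y k) = s ^+ 3 * form3 deg3_mnms cf y.
Proof. unfold_form; ring. Qed.

(* The binary cubic [F (s a + t b)] has coefficients [F a], [b . grad F a],
   [a . grad F b] and [F b]. *)
Lemma cubic_span_eq0 cf s t a b :
  form3 deg3_mnms cf a = 0 -> form3 deg3_mnms cf b = 0 ->
  (forall k, form3_deriv deg3_mnms cf k a = 0) -> (forall k, form3_deriv deg3_mnms cf k b = 0) ->
  form3 deg3_mnms cf (fun k => s * a k + t * b k) = 0.
Proof.
move=> Fa Fb dFa dFb.
have -> : form3 deg3_mnms cf (fun k => s * a k + t * b k) =
    form3 deg3_mnms cf a * s ^+ 3
    + (\sum_(k < 3) b k * form3_deriv deg3_mnms cf k a) * s ^+ 2 * t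
    + (\sum_(k < 3) a k * form3_deriv deg3_mnms cf k b) * s * t ^+ 2
    + form3 deg3_mnms cf b * t ^+ 3.
  by rewrite !big_ord3; unfold_form; ring.
by rewrite Fa Fb !big1 => [|k _|k _]; rewrite ?dFa ?dFb ?mulr0 ?mul0r ?addr0.
Qed.

Definition det3R a b c : R :=
  a i0 * (b i1 * c i2 - b i2 * c i1)
  - a i1 * (b i0 * c i2 - b i2 * c i0)
  + a i2 * (b i0 * c i1 - b i1 * c i0).

Lemma det3R_cramer a b r x k :
  det3R a b r * x k - (det3R x b r * a k + det3R a x r * b k) = det3R a b x * r k.
Proof. by move: k; apply: ord3P; rewrite /det3R; ring. Qed.

Lemma det3R_mul_dot a b c g k :
  let dot x := \sum_(l < 3) x l * g l in
  let ek l := (l == k)%:R in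
  det3R a b c * g k = det3R ek b c * dot a + det3R a ek c * dot b + det3R a b ek * dot c.
Proof. by move: k; apply: ord3P; rewrite /= !big_ord3 /det3R /=; ring. Qed.

Lemma det3R_scale s a b c :
  det3R (fun l => s * a l) (fun l => s * b l) (fun l => s * c l) = s ^+ 3 * det3R a b c.
Proof. rewrite /det3R; ring. Qed.

End FormIdentities.

Section FormMorphism.
Variables (R S : comPzRingType) (f : {rmorphism R -> S}).

Lemma form3_rmorph ms (cf : 'X_{1..3} -> R) (y : 'I_3 -> R) :
  f (form3 ms cf y) = form3 ms (f \o cf) (f \o y).
Proof.
rewrite /form3 rmorph_sum; apply: eq_bigr => m _.
by rewrite (rmorphM f) /monom !(rmorphM f) !(rmorphXn f).
Qed.

Lemma form3_deriv_rmorph ms (cf : 'X_{1..3} -> R) k (y : 'I_3 -> R) :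
  f (form3_deriv ms cf k y) = form3_deriv ms (f \o cf) k (f \o y).
Proof.
rewrite /form3_deriv rmorph_sum; apply: eq_bigr => m _.
by rewrite !(rmorphM f) (rmorph_nat f) !(rmorphXn f).
Qed.

Lemma det3R_rmorph (a b c : 'I_3 -> R) : f (det3R a b c) = det3R (f \o a) (f \o b) (f \o c).
Proof. by rewrite /det3R !(rmorphD f, rmorphN f, rmorphM f). Qed.

End FormMorphism.

Section MpolyForms.
Variable R : comNzRingType.
Implicit Types (ms : seq 'X_{1..3}) (c : 'X_{1..3} -> R).

Lemma meval_sum_mnms ms c x :
  meval x (\sum_(m <- ms) (c m)%:MP * 'X_[m]) = form3 ms c x.
Proof.
rewrite (big_morph (meval x) (mevalD x) (meval0 x)); apply: eq_bigr => m _.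
by rewrite mevalM mevalC mevalX big_ord3.
Qed.

Lemma meval_mderiv_sum_mnms ms c k x :
  meval x (mderiv k (\sum_(m <- ms) (c m)%:MP * 'X_[m])) = form3_deriv ms c k x.
Proof.
rewrite (big_morph (mderiv k) (mderivD k) (mderiv0 _ k)).
rewrite (big_morph (meval x) (mevalD x) (meval0 x)); apply: eq_bigr => m _.
rewrite mderiv_mulC mderivX mevalM mevalC -mul_mpolyC mevalM mevalX big_ord3 mevalC.
by rewrite mulrA.
Qed.

Lemma comp_sum_mnms k ms c (T : 3.-tuple {mpoly R[k]}) :
  (\sum_(m <- ms) (c m)%:MP * 'X_[m]) \mPo T = form3 ms (fun m => (c m)%:MP) (tnth T).
Proof.
rewrite (big_morph (comp_mpoly T) (comp_mpolyD T) (comp_mpoly0 T)); apply: eq_bigr => m _.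
by rewrite comp_mpolyM comp_mpolyC comp_mpolyX big_ord3.
Qed.

Variable F : {mpoly R[3]}.
Hypothesis homF : F \is 3.-homog.

Lemma cubic_mpolyE : F = \sum_(m <- deg3_mnms) (F@_m)%:MP * 'X_[m].
Proof. exact: dhomog_sum_mnms deg3_mnmsP homF. Qed.

Lemma meval_cubic x : meval x F = form3 deg3_mnms (fun m => F@_m) x.
Proof. by rewrite {1}cubic_mpolyE meval_sum_mnms. Qed.

Lemma meval_mderiv_cubic k x :
  meval x (mderiv k F) = form3_deriv deg3_mnms (fun m => F@_m) k x.
Proof. by rewrite {1}cubic_mpolyE meval_mderiv_sum_mnms. Qed.

Lemma comp_cubic n (T : 3.-tuple {mpoly R[n]}) :
  F \mPo T = form3 deg3_mnms (fun m => (F@_m)%:MP) (tnth T).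
Proof. by rewrite {1}cubic_mpolyE comp_sum_mnms. Qed.

Lemma cubic_euler_meval a :
  \sum_(k < 3) a k * meval a (mderiv k F) = 3%:R * meval a F.
Proof. by rewrite meval_cubic -cubic_euler; apply: eq_bigr => k _; rewrite meval_mderiv_cubic. Qed.

End MpolyForms.

(** * Charts and singular points *)

Definition dir_deriv (F : {mpoly C[3]}) (a v : vec) : C :=
  \sum_(k < 3) v k * meval a (mderiv k F).

Local Notation zero2 := (fun _ : 'I_2 => 0 : C).

Definition j0 : 'I_2 := 0.
Definition j1 : 'I_2 := 1.

Lemma tnth_chart a w u k :
  tnth (chart a w u) k = (a k)%:MP + (w k)%:MP * 'X_j0 + (u k)%:MP * 'X_j1.
Proof. by rewrite tnth_mktuple !mul_mpolyC. Qed.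

Lemma tnth_bchart a w u k :
  tnth (bchart a w u) k = (a k)%:MP + (w k)%:MP * 'X_j0 + (u k)%:MP * ('X_j0 * 'X_j1).
Proof. by rewrite tnth_mktuple !mul_mpolyC. Qed.

Lemma meval0_tnth_chart a w u k : meval zero2 (tnth (chart a w u) k) = a k.
Proof. by rewrite tnth_chart !mevalD !mevalM !mevalC !mevalXU !mulr0 !addr0. Qed.

Lemma meval0_tnth_bchart a w u k : meval zero2 (tnth (bchart a w u) k) = a k.
Proof. by rewrite tnth_bchart !mevalD !mevalM !mevalC !mevalXU !mulr0 !addr0. Qed.

Lemma mderivX_j0j0 : mderiv j0 ('X_j0 : {mpoly C[2]}) = 1.
Proof. by rewrite mderivXU eqxx mpolyC1. Qed.
Lemma mderivX_j1j1 : mderiv j1 ('X_j1 : {mpoly C[2]}) = 1.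
Proof. by rewrite mderivXU eqxx mpolyC1. Qed.
Lemma mderivX_j0j1 : mderiv j1 ('X_j0 : {mpoly C[2]}) = 0.
Proof. by rewrite mderivXU /= mpolyC0. Qed.
Lemma mderivX_j1j0 : mderiv j0 ('X_j1 : {mpoly C[2]}) = 0.
Proof. by rewrite mderivXU /= mpolyC0. Qed.

Lemma mderiv0_tnth_chart a w u k : mderiv j0 (tnth (chart a w u) k) = (w k)%:MP.
Proof.
rewrite tnth_chart !mderivD !mderiv_mulC mderivC mderivX_j0j0 mderivX_j1j0.
by rewrite mulr0 mulr1 addr0 add0r.
Qed.

Lemma mderiv1_tnth_chart a w u k : mderiv j1 (tnth (chart a w u) k) = (u k)%:MP.
Proof.
rewrite tnth_chart !mderivD !mderiv_mulC mderivC mderivX_j1j1 mderivX_j0j1.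
by rewrite mulr0 mulr1 addr0 add0r.
Qed.

Lemma mderiv0_tnth_bchart a w u k :
  mderiv j0 (tnth (bchart a w u) k) = (w k)%:MP + (u k)%:MP * 'X_j1.
Proof.
rewrite tnth_bchart !mderivD !mderiv_mulC mderivC mderivM mderivX_j0j0 mderivX_j1j0.
by rewrite mulr0 mulr1 addr0 add0r mul1r.
Qed.

Lemma mderiv1_tnth_bchart a w u k : mderiv j1 (tnth (bchart a w u) k) = (u k)%:MP * 'X_j0.
Proof.
rewrite tnth_bchart !mderivD !mderiv_mulC mderivC mderivM mderivX_j1j1 mderivX_j0j1.
by rewrite mulr0 mulr1 mul0r !add0r.
Qed.

Lemma mcoeff0_chart F a w u : (F \mPo chart a w u)@_0 = meval a F.
Proof.
by rewrite mcoeff0_meval comp_mpoly_meval; apply: meval_eq => k; apply: meval0_tnth_chart.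
Qed.

Lemma mcoeff0_bchart F a w u : (F \mPo bchart a w u)@_0 = meval a F.
Proof.
by rewrite mcoeff0_meval comp_mpoly_meval; apply: meval_eq => k; apply: meval0_tnth_bchart.
Qed.

Lemma mcoeffU0_chart F a w u : (F \mPo chart a w u)@_(U_(j0)) = dir_deriv F a w.
Proof.
rewrite mcoeffU_mderiv mderiv_comp mcoeff0_meval.
rewrite (big_morph (meval zero2) (mevalD zero2) (meval0 zero2)); apply: eq_bigr => k _.
rewrite mevalM mderiv0_tnth_chart mevalC comp_mpoly_meval; congr (_ * _).
by apply: meval_eq => l; apply: meval0_tnth_chart.
Qed.

Lemma mcoeffU1_chart F a w u : (F \mPo chart a w u)@_(U_(j1)) = dir_deriv F a u.
Proof.
rewrite mcoeffU_mderiv mderiv_comp mcoeff0_meval.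
rewrite (big_morph (meval zero2) (mevalD zero2) (meval0 zero2)); apply: eq_bigr => k _.
rewrite mevalM mderiv1_tnth_chart mevalC comp_mpoly_meval; congr (_ * _).
by apply: meval_eq => l; apply: meval0_tnth_chart.
Qed.

Lemma mcoeffU0_bchart F a w u : (F \mPo bchart a w u)@_(U_(j0)) = dir_deriv F a w.
Proof.
rewrite mcoeffU_mderiv mderiv_comp mcoeff0_meval.
rewrite (big_morph (meval zero2) (mevalD zero2) (meval0 zero2)); apply: eq_bigr => k _.
rewrite mevalM mderiv0_tnth_bchart mevalD mevalM !mevalC mevalXU mulr0 addr0.
rewrite comp_mpoly_meval; congr (_ * _).
by apply: meval_eq => l; apply: meval0_tnth_bchart.
Qed.

Lemma mcoeffU01_bchart F a w u :
  (F \mPo bchart a w u)@_(U_(j0) + U_(j1)) = dir_deriv F a u.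
Proof.
rewrite mcoeffUU_mderiv // mderiv_comp mcoeff0_meval.
rewrite (big_morph (mderiv j1) (mderivD j1) (mderiv0 _ j1)).
rewrite (big_morph (meval zero2) (mevalD zero2) (meval0 zero2)); apply: eq_bigr => k _.
rewrite mderiv0_tnth_bchart mderivM mderivD mderivC mderiv_mulC mderivX_j1j1 add0r mulr1.
rewrite mderiv_comp mevalD !mevalM.
rewrite [meval zero2 (\sum_(l < 3) _)](big_morph (meval zero2) (mevalD zero2) (meval0 zero2)).
rewrite big1; last first.
  by move=> l _; rewrite mevalM mderiv1_tnth_bchart mevalM mevalC mevalXU !mulr0 mul0r.
rewrite mulr0 addr0 mevalC comp_mpoly_meval; congr (_ * _).
by apply: meval_eq => l; apply: meval0_tnth_bchart.
Qed.

Definition unit_vec (k : 'I_3) : vec := fun l => if l == k then 1 else 0.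

Lemma det3E a b c : det3 a b c = det3R a b c. Proof. by []. Qed.

Lemma det3_unit_vec0 a b : det3 a b (unit_vec i0) = a i1 * b i2 - a i2 * b i1.
Proof. rewrite det3E /det3R /unit_vec /=; ring. Qed.
Lemma det3_unit_vec1 a b : det3 a b (unit_vec i1) = a i2 * b i0 - a i0 * b i2.
Proof. rewrite det3E /det3R /unit_vec /=; ring. Qed.
Lemma det3_unit_vec2 a b : det3 a b (unit_vec i2) = a i0 * b i1 - a i1 * b i0.
Proof. rewrite det3E /det3R /unit_vec /=; ring. Qed.

Lemma det3_completion a : nz a -> exists w u, det3 a w u != 0.
Proof.
case=> k; move: k; apply: ord3P => h.
- by exists (unit_vec i1), (unit_vec i2); rewrite det3_unit_vec2 /unit_vec /= mulr1 mulr0 subr0.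
- by exists (unit_vec i2), (unit_vec i0); rewrite det3_unit_vec0 /unit_vec /= mulr1 mulr0 subr0.
- by exists (unit_vec i0), (unit_vec i1); rewrite det3_unit_vec1 /unit_vec /= mulr1 mulr0 subr0.
Qed.

Lemma det3_unit_vec_neq0 a b : nz a -> ~ (exists c, forall k, b k = c * a k) ->
  exists k, det3 a b (unit_vec k) != 0.
Proof.
move=> [j aj0] nprop.
case: (eqVneq (det3 a b (unit_vec i0)) 0) => [|?]; last by exists i0.
case: (eqVneq (det3 a b (unit_vec i1)) 0) => [|?]; last by exists i1.
case: (eqVneq (det3 a b (unit_vec i2)) 0) => [|?]; last by exists i2.
rewrite det3_unit_vec0 det3_unit_vec1 det3_unit_vec2.
move=> /eqP; rewrite subr_eq0 => /eqP E2 /eqP; rewrite subr_eq0 => /eqP E1.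
move=> /eqP; rewrite subr_eq0 => /eqP E0.
have cross k l : b l * a k = b k * a l.
  by move: k l; apply: ord3P; apply: ord3P; rewrite mulrC [RHS]mulrC ?E0 ?E1 ?E2 // mulrC.
by case: nprop; exists (b j / a j) => k; rewrite mulrAC -cross mulfK.
Qed.

Definition singular_at (F : {mpoly C[3]}) (p : vec) : Prop :=
  forall k, meval p (mderiv k F) = 0.

Lemma singular_at_root F p : F \is 3.-homog -> singular_at F p -> meval p F = 0.
Proof.
move=> homF sing.
have grad0 : \sum_(k < 3) p k * meval p (mderiv k F) = 0.
  by rewrite big1 // => k _; rewrite sing mulr0.
have := cubic_euler_meval homF p; rewrite grad0 => /esym/eqP.
by rewrite mulf_eq0 Num.Theory.pnatr_eq0 => /eqP.
Qed.

Lemma dir_deriv_eq0_singular F a w u : det3 a w u != 0 ->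
  dir_deriv F a a = 0 -> dir_deriv F a w = 0 -> dir_deriv F a u = 0 -> singular_at F a.
Proof.
move=> hdet ha hw hu k.
have := det3R_mul_dot a w u (fun l => meval a (mderiv l F)) k.
rewrite /= -/(dir_deriv F a a) -/(dir_deriv F a w) -/(dir_deriv F a u) ha hw hu.
by rewrite !mulr0 !addr0 => /eqP; rewrite mulf_eq0 -det3E (negbTE hdet) => /eqP.
Qed.

Lemma dir_deriv_self F a : F \is 3.-homog -> dir_deriv F a a = 3%:R * meval a F.
Proof. by move=> homF; rewrite /dir_deriv cubic_euler_meval. Qed.

Lemma pmult_ge1_root F p : nz p -> pmult_ge F p 1 -> meval p F = 0.
Proof.
move=> hp hm; have [w [u hwu]] := det3_completion hp.
by rewrite -(mcoeff0_chart F p w u); apply: hm; rewrite ?mdeg0.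
Qed.

Lemma pmult_ge2_singular F p : F \is 3.-homog -> nz p -> pmult_ge F p 2 -> singular_at F p.
Proof.
move=> homF hp hm; have [w [u hwu]] := det3_completion hp.
have ord2 := hm w u hwu.
apply: (dir_deriv_eq0_singular hwu).
- by rewrite dir_deriv_self // -(mcoeff0_chart F p w u) ord2 ?mdeg0 ?mulr0.
- by rewrite -(mcoeffU0_chart F p w u) ord2 ?mdeg1.
- by rewrite -(mcoeffU1_chart F p w u) ord2 ?mdeg1.
Qed.

Lemma exc_mult_ge2_singular F a w : F \is 3.-homog -> nz a -> meval a F = 0 ->
  ~ (exists c, forall k, w k = c * a k) ->
  (forall u, det3 a w u != 0 -> ord_ge (F \mPo bchart a w u) (2 + 1)) ->
  singular_at F a.
Proof.
move=> homF ha Fa0 nprop hm.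
have [k hk] := det3_unit_vec_neq0 ha nprop.
have ord3 := hm _ hk.
apply: (dir_deriv_eq0_singular hk).
- by rewrite dir_deriv_self // Fa0 mulr0.
- by rewrite -(mcoeffU0_bchart F a w (unit_vec k)) ord3 ?mdeg1.
- by rewrite -(mcoeffU01_bchart F a w (unit_vec k)) ord3 // mdegD !mdeg1.
Qed.

Lemma pmult_ge_weaken F p m m' : (m' <= m)%N -> pmult_ge F p m -> pmult_ge F p m'.
Proof. by move=> le hm w u hd mon hmon; apply: hm => //; apply: leq_trans hmon le. Qed.

Lemma tnth_chart_scale c a w u k :
  tnth (chart (fun l => c * a l) (fun l => c * w l) (fun l => c * u l)) k
  = c%:MP * tnth (chart a w u) k.
Proof. by rewrite !tnth_chart !mpolyCM; ring. Qed.

Lemma pmult_ge_scale F p c m : F \is 3.-homog -> c != 0 ->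
  pmult_ge F (fun l => c * p l) m -> pmult_ge F p m.
Proof.
move=> homF hc h w u hd mon hmon.
have hd' : det3 (fun l => c * p l) (fun l => c * w l) (fun l => c * u l) != 0.
  by rewrite det3E det3R_scale mulf_neq0 // expf_neq0.
have := h _ _ hd' mon hmon.
rewrite comp_cubic // (@form3_ext _ _ _ _ (fun k => c%:MP * tnth (chart p w u) k)).
  rewrite cubic_scale -comp_cubic // -rmorphXn mcoeffCM => /eqP.
  by rewrite mulf_eq0 expf_eq0 (negbTE hc) andbF => /eqP.
by move=> k; rewrite tnth_chart_scale.
Qed.

Section Factorization.
Variables (R : comNzRingType) (n : nat).
Implicit Types G H : {mpoly R[n]}.

Lemma msize_dhomog G d : G \is d.-homog -> G != 0 -> msize G = d.+1.
Proof. by move=> h nG; rewrite -mlead_deg // (dhomog_mf h) // mlead_supp. Qed.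

(* Only the product of the top homogeneous parts has degree three. *)
Lemma dhomog3_factor G H : G * H \is 3.-homog -> (msize G <= 2)%N -> (msize H <= 3)%N ->
  G * H = pihomog mdeg 1 G * pihomog mdeg 2 H.
Proof.
move=> homGH sG sH.
have eG : G = pihomog mdeg 0 G + pihomog mdeg 1 G.
  by rewrite {1}(pihomog_partitionE sG) !big_ord_recr big_ord0 /= add0r.
have eH : H = pihomog mdeg 0 H + pihomog mdeg 1 H + pihomog mdeg 2 H.
  by rewrite {1}(pihomog_partitionE sH) !big_ord_recr big_ord0 /= add0r.
rewrite -(pihomog_dE homGH) {1}eG {1}eH !mulrDl !mulrDr !pihomogD.
have pi3 d e (A B : {mpoly R[n]}) : (d + e != 3)%N ->
    pihomog mdeg 3 (pihomog mdeg d A * pihomog mdeg e B) = 0.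
  by move=> ne; apply: pihomog_ne0 ne (dhomogM (pihomogP _ _ _) (pihomogP _ _ _)).
rewrite (pihomog_dE (dhomogM (pihomogP mdeg 1 G) (pihomogP mdeg 2 H))).
by rewrite !pi3 // !(add0r, addr0).
Qed.

End Factorization.

Definition cvec (v : vec) : 'I_3 -> {mpoly C[3]} := fun l => (v l)%:MP.
Definition xvec : 'I_3 -> {mpoly C[3]} := fun l => 'X_l.

Lemma meval_det3R_xvec (x a b : vec) : meval x (det3R (cvec a) (cvec b) xvec) = det3 a b x.
Proof. by rewrite (det3R_rmorph (meval x)) /det3R /cvec /xvec /= !mevalC !mevalXU. Qed.

Lemma det3R_cvec (a b c : vec) : det3R (cvec a) (cvec b) (cvec c) = (det3 a b c)%:MP.
Proof. by rewrite (det3R_rmorph (@mpolyC 3 C)). Qed.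

Section SingularCubic.
Variable F : {mpoly C[3]}.
Hypothesis homF : F \is 3.-homog.

Lemma comp_cubic_id : F = form3 deg3_mnms (fun m => (F@_m)%:MP) xvec.
Proof.
rewrite -{1}(comp_mpoly_id F) (comp_cubic homF).
by apply: form3_ext => l; rewrite tnth_mktuple.
Qed.

Lemma comp_cubic_scale (d : {mpoly C[3]}) : F \mPo [tuple d * 'X_l | l < 3] = d ^+ 3 * F.
Proof.
rewrite (comp_cubic homF) (@form3_ext _ _ _ _ (fun l => d * xvec l)); last first.
  by move=> l; rewrite tnth_mktuple.
by rewrite cubic_scale -comp_cubic_id.
Qed.
(* The restriction of [F] to the line through two singular points is a binary
   cubic all of whose coefficients vanish. *)
Lemma comp_cubic_line (p p' : vec) (s t : {mpoly C[3]}) :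
  singular_at F p -> singular_at F p' ->
  F \mPo [tuple s * (p l)%:MP + t * (p' l)%:MP | l < 3] = 0.
Proof.
move=> sp sp'.
have val v : form3 deg3_mnms (fun m => (F@_m)%:MP) (cvec v) = (meval v F)%:MP.
  by rewrite meval_cubic // (form3_rmorph (@mpolyC 3 C)).
have grad v l : form3_deriv deg3_mnms (fun m => (F@_m)%:MP) l (cvec v)
                = (meval v (mderiv l F))%:MP.
  by rewrite meval_mderiv_cubic // (form3_deriv_rmorph (@mpolyC 3 C)).
rewrite (comp_cubic homF) (@form3_ext _ _ _ _ (fun l => s * cvec p l + t * cvec p' l)).
  apply: cubic_span_eq0 => [||k|k].
  - by rewrite val singular_at_root // mpolyC0.
  - by rewrite val singular_at_root // mpolyC0.
  - by rewrite grad sp mpolyC0.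
  - by rewrite grad sp' mpolyC0.
by move=> l; rewrite tnth_mktuple.
Qed.

Lemma cubic_two_singular_factor p p' k :
  singular_at F p -> singular_at F p' -> det3 p p' (unit_vec k) != 0 ->
  exists Q, F = det3R (cvec p) (cvec p') xvec * Q.
Proof.
move=> sp sp' hdet.
set D := det3 p p' (unit_vec k).
have cramer l :
    tnth [tuple D%:MP * 'X_l | l < 3] l
    - tnth [tuple det3R xvec (cvec p') (cvec (unit_vec k)) * (p l)%:MP
                  + det3R (cvec p) xvec (cvec (unit_vec k)) * (p' l)%:MP | l < 3] l
    = det3R (cvec p) (cvec p') xvec * cvec (unit_vec k) l.
  by rewrite !tnth_mktuple -det3R_cvec; apply: det3R_cramer.
have [Q hQ] := comp_mpolyB_dvd cramer F.
rewrite comp_cubic_scale comp_cubic_line // subr0 in hQ.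
exists ((D ^- 3)%:MP * Q); rewrite mulrCA -hQ mulrA -rmorphXn -mpolyCM.
by rewrite mulVf ?mul1r // expf_neq0.
Qed.

End SingularCubic.

(** * Interpolation determinants and general position *)

Definition interp_op (o : option 'I_3) (q : {mpoly C[3]}) : {mpoly C[3]} :=
  if o is Some k then mderiv k q else q.

Lemma interp_op_mulC o c q : interp_op o (c%:MP * q) = c%:MP * interp_op o q.
Proof. by case: o => [k|] //=; rewrite mderiv_mulC. Qed.
Lemma interp_opD o p q : interp_op o (p + q) = interp_op o p + interp_op o q.
Proof. by case: o => [k|] //=; rewrite mderivD. Qed.
Lemma interp_op0 o : interp_op o 0 = 0.
Proof. by case: o => [k|] //=; rewrite mderiv0. Qed.

(* [coords] stores the coordinate [k] of the point [a] at index [3 a + k]. *)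
Definition coord_var (a : 'I_8) (k : 'I_3) : 'I_24 := inord (3 * a + k).
Definition point_vars (a : 'I_8) : 3.-tuple {mpoly C[24]} := [tuple 'X_(coord_var a k) | k < 3].

Lemma coords_coord_var P a k : coords P (coord_var a k) = P a k.
Proof.
have hlt : (3 * a + k < 24)%N by have := ltn_ord a; have := ltn_ord k; lia.
rewrite /coords /coord_var inordK //.
rewrite mulnC divnMDl // divn_small ?addn0 // modnMDl modn_small //.
by rewrite !inord_val.
Qed.

Lemma meval_point_vars P a q : meval (coords P) (q \mPo point_vars a) = meval (P a) q.
Proof.
rewrite comp_mpoly_meval; apply: meval_eq => k.
by rewrite tnth_mktuple mevalXU coords_coord_var.
Qed.

Section InterpolationDet.
Variables (N : nat) (ms : seq 'X_{1..3}) (cond : 'I_N -> 'I_8 * option 'I_3).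
Hypotheses (size_ms : size ms = N) (uniq_ms : uniq ms).

Definition interp_mx (P : 'I_8 -> vec) : 'M[C]_N :=
  \matrix_(j, r) meval (P (cond r).1) (interp_op (cond r).2 'X_[nth 0%MM ms j]).

Definition interp_det : {mpoly C[24]} :=
  \det (\matrix_(j, r) (interp_op (cond r).2 'X_[nth 0%MM ms j] \mPo point_vars (cond r).1)).

Lemma meval_interp_det P : meval (coords P) interp_det = \det (interp_mx P).
Proof.
rewrite /interp_det -det_map_mx; congr (\det _); apply/matrixP => j r.
by rewrite !mxE; apply: meval_point_vars.
Qed.

Lemma sum_mnms_ord (c : 'X_{1..3} -> C) :
  \sum_(m <- ms) (c m)%:MP * 'X_[m]
  = \sum_(j < N) (c (nth 0%MM ms j))%:MP * 'X_[nth 0%MM ms j] :> {mpoly C[3]}.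
Proof. by rewrite (big_nth 0%MM) size_ms big_mkord. Qed.

Lemma interp_mx_mul P (v : 'rV_N) r :
  (v *m interp_mx P) 0 r
  = meval (P (cond r).1) (interp_op (cond r).2 (\sum_(j < N) (v 0 j)%:MP * 'X_[nth 0%MM ms j])).
Proof.
rewrite !mxE (big_morph (interp_op (cond r).2) (interp_opD _) (interp_op0 _)).
rewrite (big_morph (meval (P (cond r).1)) (mevalD _) (meval0 _)).
by apply: eq_bigr => j _; rewrite !mxE interp_op_mulC mevalM mevalC.
Qed.

Lemma interp_unique P F : F = \sum_(m <- ms) (F@_m)%:MP * 'X_[m] ->
  \det (interp_mx P) != 0 ->
  (forall r, meval (P (cond r).1) (interp_op (cond r).2 F) = 0) -> F = 0.
Proof.
move=> hF hdet hcond.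
pose v : 'rV_N := \row_j F@_(nth 0%MM ms j).
have v0 : v = 0.
  apply/eqP; apply: contraNT hdet => nzv; apply/det0P; exists v => //.
  apply/rowP => r; rewrite interp_mx_mul mxE -(hcond r) [in RHS]hF sum_mnms_ord.
  by congr (meval _ (interp_op _ _)); apply: eq_bigr => j _; rewrite mxE.
rewrite hF big_seq big1 // => m hm.
have hi : (index m ms < N)%N by rewrite -size_ms index_mem.
have := congr1 (fun w : 'rV_N => w 0 (Ordinal hi)) v0.
by rewrite !mxE /= nth_index // => ->; rewrite mpolyC0 mul0r.
Qed.

Lemma interp_det_neq0 P :
  (forall c : 'X_{1..3} -> C,
     (forall r, meval (P (cond r).1)
                  (interp_op (cond r).2 (\sum_(m <- ms) (c m)%:MP * 'X_[m])) = 0) ->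
     forall m, m \in ms -> c m = 0) ->
  \det (interp_mx P) != 0.
Proof.
move=> htriv; apply/negP => /det0P [v nzv hv].
pose c (m : 'X_{1..3}) := \sum_(j < N | nth 0%MM ms j == m) v 0 j.
have cE (j : 'I_N) : c (nth 0%MM ms j) = v 0 j.
  rewrite /c (bigD1 j) //= big1 ?addr0 // => l /andP [/eqP e ne].
  case/negP: ne; apply/eqP/val_inj => /=.
  by apply/eqP; rewrite -(nth_uniq 0%MM _ _ uniq_ms) ?e // size_ms.
have c0 : forall m, m \in ms -> c m = 0.
  apply: htriv => r; rewrite sum_mnms_ord.
  under eq_bigr => j _ do rewrite cE.
  by rewrite -interp_mx_mul hv mxE.
case/negP: nzv; apply/eqP/rowP => j.
by rewrite mxE -cE c0 // mem_nth // size_ms.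
Qed.

End InterpolationDet.

Definition pt3 (x y z : C) : vec := fun k => if k == i0 then x else if k == i1 then y else z.

Lemma line_witness (c : 'X_{1..3} -> C) :
  (forall r, form3 deg1_mnms c (unit_vec r) = 0) -> forall m, m \in deg1_mnms -> c m = 0.
Proof.
move=> h m; have := h i0; have := h i1; have := h i2; unfold_form; rewrite /unit_vec /=.
rewrite !(expr0, expr1, mulr1, mulr0, mul1r, addr0, add0r) => h2 h1 h0.
by rewrite !inE => /or3P [] /eqP ->.
Qed.

Definition conic_pts (r : 'I_6) : vec :=
  match val r with
  | 0 => unit_vec i0 | 1 => unit_vec i1 | 2 => unit_vec i2
  | 3 => pt3 1 1 0 | 4 => pt3 0 1 1 | _ => pt3 1 0 1
  end.

Lemma conic_witness (c : 'X_{1..3} -> C) :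
  (forall r, form3 deg2_mnms c (conic_pts r) = 0) -> forall m, m \in deg2_mnms -> c m = 0.
Proof.
move=> h m hm.
have E0 : c (mnm3 2 0 0) = 0.
  by rewrite -(h (@Ordinal 6 0 isT)); unfold_form; rewrite /unit_vec /=; ring.
have E1 : c (mnm3 0 2 0) = 0.
  by rewrite -(h (@Ordinal 6 1 isT)); unfold_form; rewrite /unit_vec /=; ring.
have E2 : c (mnm3 0 0 2) = 0.
  by rewrite -(h (@Ordinal 6 2 isT)); unfold_form; rewrite /unit_vec /=; ring.
have E3 : c (mnm3 2 0 0) + c (mnm3 0 2 0) + c (mnm3 1 1 0) = 0.
  by rewrite -(h (@Ordinal 6 3 isT)); unfold_form; rewrite /pt3 /=; ring.
have E4 : c (mnm3 0 2 0) + c (mnm3 0 0 2) + c (mnm3 0 1 1) = 0.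
  by rewrite -(h (@Ordinal 6 4 isT)); unfold_form; rewrite /pt3 /=; ring.
have E5 : c (mnm3 2 0 0) + c (mnm3 0 0 2) + c (mnm3 1 0 1) = 0.
  by rewrite -(h (@Ordinal 6 5 isT)); unfold_form; rewrite /pt3 /=; ring.
rewrite E0 E1 !add0r in E3; rewrite E1 E2 !add0r in E4; rewrite E0 E2 !add0r in E5.
by apply/eqP; move: m hm; apply/allP; rewrite /= E0 E1 E2 E3 E4 E5 eqxx.
Qed.

Definition cubic_pts (n : nat) : vec :=
  match n with
  | 0 => unit_vec i1 | 1 => unit_vec i2 | 2 => pt3 1 1 0 | 3 => pt3 1 0 1
  | 4 => pt3 1 1 1 | 5 => pt3 0 1 1 | _ => pt3 0 1 (-1)
  end.

Lemma sing_cubic_witness (c : 'X_{1..3} -> C) :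
  (forall k, form3_deriv deg3_mnms c k (unit_vec i0) = 0) ->
  (forall n, (n < 7)%N -> form3 deg3_mnms c (cubic_pts n) = 0) ->
  forall m, m \in deg3_mnms -> c m = 0.
Proof.
move=> hD hP m hm.
have E0 : c (mnm3 3 0 0) * 3%:R = 0 by rewrite -(hD i0); unfold_form; rewrite /unit_vec /=; ring.
have E1 : c (mnm3 2 1 0) = 0 by rewrite -(hD i1); unfold_form; rewrite /unit_vec /=; ring.
have E2 : c (mnm3 2 0 1) = 0 by rewrite -(hD i2); unfold_form; rewrite /unit_vec /=; ring.
have E3 : c (mnm3 0 3 0) = 0 by rewrite -(hP 0%N isT); unfold_form; rewrite /unit_vec /=; ring.
have E4 : c (mnm3 0 0 3) = 0 by rewrite -(hP 1%N isT); unfold_form; rewrite /unit_vec /=; ring.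
have E5 : c (mnm3 3 0 0) + c (mnm3 2 1 0) + c (mnm3 1 2 0) + c (mnm3 0 3 0) = 0.
  by rewrite -(hP 2%N isT); unfold_form; rewrite /pt3 /=; ring.
have E6 : c (mnm3 3 0 0) + c (mnm3 2 0 1) + c (mnm3 1 0 2) + c (mnm3 0 0 3) = 0.
  by rewrite -(hP 3%N isT); unfold_form; rewrite /pt3 /=; ring.
have E7 : c (mnm3 3 0 0) + c (mnm3 2 1 0) + c (mnm3 2 0 1) + c (mnm3 1 2 0) + c (mnm3 1 1 1)
  + c (mnm3 1 0 2) + c (mnm3 0 3 0) + c (mnm3 0 2 1) + c (mnm3 0 1 2) + c (mnm3 0 0 3) = 0.
  by rewrite -(hP 4%N isT); unfold_form; rewrite /pt3 /=; ring.
have E8 : c (mnm3 0 3 0) + c (mnm3 0 2 1) + c (mnm3 0 1 2) + c (mnm3 0 0 3) = 0.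
  by rewrite -(hP 5%N isT); unfold_form; rewrite /pt3 /=; ring.
have E9 : c (mnm3 0 3 0) - c (mnm3 0 2 1) + c (mnm3 0 1 2) - c (mnm3 0 0 3) = 0.
  by rewrite -(hP 6%N isT); unfold_form; rewrite /pt3 /=; ring.
have Z0 : c (mnm3 3 0 0) = 0.
  by move/eqP: E0; rewrite mulf_eq0 Num.Theory.pnatr_eq0 orbF => /eqP.
rewrite Z0 E1 E3 !add0r addr0 in E5; rewrite Z0 E2 E4 !add0r addr0 in E6.
have Z8 : c (mnm3 0 1 2) = 0.
  have : c (mnm3 0 1 2) *+ 2 = (c (mnm3 0 3 0) + c (mnm3 0 2 1) + c (mnm3 0 1 2) + c (mnm3 0 0 3))
    + (c (mnm3 0 3 0) - c (mnm3 0 2 1) + c (mnm3 0 1 2) - c (mnm3 0 0 3)) - c (mnm3 0 3 0) *+ 2.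
    by rewrite !mulr2n; ring.
  by rewrite E8 E9 E3 add0r mul0rn subr0 => /eqP; rewrite Num.Theory.mulrn_eq0 => /eqP.
have Z7 : c (mnm3 0 2 1) = 0 by move: E8; rewrite E3 E4 Z8 add0r !addr0.
rewrite Z0 E1 E2 E5 E6 E3 E4 Z7 Z8 !add0r !addr0 in E7.
by apply/eqP; move: m hm; apply/allP; rewrite /= Z0 E1 E2 E3 E4 E5 E6 E7 Z7 Z8 eqxx.
Qed.

Definition value_conds n (f : 'I_n -> 'I_8) : 'I_n -> 'I_8 * option 'I_3 :=
  fun r => (f r, None).

Definition sing_conds (i : 'I_8) : 'I_10 -> 'I_8 * option 'I_3 :=
  fun r => if (r < 3)%N then (i, Some (inord r)) else (lift i (inord (r - 3)), None).

Definition line_det (f : {ffun 'I_3 -> 'I_8}) := interp_det deg1_mnms (value_conds f).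
Definition conic_det (f : {ffun 'I_6 -> 'I_8}) := interp_det deg2_mnms (value_conds f).
Definition sing_cubic_det (i : 'I_8) := interp_det deg3_mnms (sing_conds i).

Definition place_points n (f : 'I_n -> 'I_8) (pts : 'I_n -> vec) : 'I_8 -> vec :=
  fun a => if [pick r | f r == a] is Some r then pts r else unit_vec i0.

Lemma place_points_inj n (f : 'I_n -> 'I_8) pts r :
  injective f -> place_points f pts (f r) = pts r.
Proof.
move=> hf; rewrite /place_points.
by case: pickP => [r' /eqP /hf -> //|/(_ r)]; rewrite eqxx.
Qed.

Lemma neq0_of_meval n (p : {mpoly C[n]}) x : meval x p != 0 -> p != 0.
Proof. by apply: contraNneq => ->; rewrite meval0. Qed.

Lemma line_det_neq0 (f : {ffun 'I_3 -> 'I_8}) : injective f -> line_det f != 0.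
Proof.
move=> hf; apply: (@neq0_of_meval _ _ (coords (place_points f unit_vec))).
rewrite meval_interp_det //; apply: interp_det_neq0 => // c h.
by apply: line_witness => r; move: (h r); rewrite /= place_points_inj // meval_sum_mnms.
Qed.

Lemma conic_det_neq0 (f : {ffun 'I_6 -> 'I_8}) : injective f -> conic_det f != 0.
Proof.
move=> hf; apply: (@neq0_of_meval _ _ (coords (place_points f conic_pts))).
rewrite meval_interp_det //; apply: interp_det_neq0 => // c h.
by apply: conic_witness => r; move: (h r); rewrite /= place_points_inj // meval_sum_mnms.
Qed.

Lemma sing_cubic_det_neq0 i : sing_cubic_det i != 0.
Proof.
pose P a := if unlift i a is Some s then cubic_pts s else unit_vec i0.
apply: (@neq0_of_meval _ _ (coords P)).
rewrite meval_interp_det //; apply: interp_det_neq0 => // c h.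
apply: sing_cubic_witness => [k|n ltn7].
  have := h (widen_ord (isT : (3 <= 10)%N) k).
  by rewrite /sing_conds /= ltn_ord inord_val /P unlift_none meval_mderiv_sum_mnms.
have lt10 : (n + 3 < 10)%N by lia.
have := h (Ordinal lt10); rewrite /sing_conds /= ltnNge leq_addl /= addnK.
by rewrite /P liftK inordK // meval_sum_mnms.
Qed.

Definition genericity_poly : {mpoly C[24]} :=
  (\prod_(f : {ffun 'I_3 -> 'I_8} | injectiveb f) line_det f) *
  (\prod_(f : {ffun 'I_6 -> 'I_8} | injectiveb f) conic_det f) *
  \prod_(i : 'I_8) sing_cubic_det i.

Lemma genericity_poly_neq0 : genericity_poly != 0.
Proof.
rewrite !mulf_neq0 //.
- by apply/prodf_neq0 => f /injectiveP; apply: line_det_neq0.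
- by apply/prodf_neq0 => f /injectiveP; apply: conic_det_neq0.
- by apply/prodf_neq0 => i _; apply: sing_cubic_det_neq0.
Qed.

Lemma exists_inj_ffun_in (T : finType) n (S : {set T}) (x0 : T) : (n <= #|S|)%N ->
  exists f : {ffun 'I_n -> T}, injective f /\ forall r, f r \in S.
Proof.
move=> hn; have lt (r : 'I_n) : (r < size (enum S))%N by rewrite -cardE (leq_trans (ltn_ord r) hn).
exists [ffun r : 'I_n => nth x0 (enum S) r]; split => [r1 r2|r]; rewrite !ffunE.
  by move/eqP; rewrite nth_uniq ?enum_uniq // => /eqP/val_inj.
by rewrite -mem_enum mem_nth.
Qed.

Section GeneralPosition.
Variable P : 'I_8 -> vec.
Hypothesis genP : meval (coords P) genericity_poly != 0.

Lemma generic_interp_dets :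
  [/\ forall f : {ffun 'I_3 -> 'I_8},
        injective f -> \det (interp_mx deg1_mnms (value_conds f) P) != 0,
      forall f : {ffun 'I_6 -> 'I_8},
        injective f -> \det (interp_mx deg2_mnms (value_conds f) P) != 0
    & forall i, \det (interp_mx deg3_mnms (sing_conds i) P) != 0].
Proof.
move: genP; rewrite /genericity_poly !rmorphM !rmorph_prod /= !mulf_eq0 !negb_or.
case/andP=> [/andP [/prodf_neq0 h3 /prodf_neq0 h6] /prodf_neq0 h10]; split.
- by move=> f /injectiveP hf; rewrite -meval_interp_det // h3.
- by move=> f /injectiveP hf; rewrite -meval_interp_det // h6.
- by move=> i; rewrite -meval_interp_det // h10.
Qed.

Lemma line_through3_eq0 L (f : {ffun 'I_3 -> 'I_8}) : L \is 1.-homog -> injective f ->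
  (forall r, meval (P (f r)) L = 0) -> L = 0.
Proof.
move=> homL hf hL; have [hdet _ _] := generic_interp_dets.
apply: (@interp_unique _ deg1_mnms (value_conds f) erefl P L _ (hdet f hf) hL).
exact: dhomog_sum_mnms deg1_mnmsP homL.
Qed.

Lemma conic_through6_eq0 Q (f : {ffun 'I_6 -> 'I_8}) : Q \is 2.-homog -> injective f ->
  (forall r, meval (P (f r)) Q = 0) -> Q = 0.
Proof.
move=> homQ hf hQ; have [_ hdet _] := generic_interp_dets.
apply: (@interp_unique _ deg2_mnms (value_conds f) erefl P Q _ (hdet f hf) hQ).
exact: dhomog_sum_mnms deg2_mnmsP homQ.
Qed.

Lemma base_cubic_singular_eq0 i F : F \is 3.-homog -> (forall j, meval (P j) F = 0) ->
  singular_at F (P i) -> F = 0.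
Proof.
move=> homF hF singF; have [_ _ hdet] := generic_interp_dets.
apply: (@interp_unique _ deg3_mnms (sing_conds i) erefl P F (cubic_mpolyE homF) (hdet i)).
by move=> r; rewrite /sing_conds; case: ifP => _ /=; [apply: singF | apply: hF].
Qed.

Lemma base_not_on_line_conic L Q : L \is 1.-homog -> L != 0 -> Q \is 2.-homog -> Q != 0 ->
  ~ (forall i, meval (P i) L = 0 \/ meval (P i) Q = 0).
Proof.
move=> homL nzL homQ nzQ hLQ.
pose SL := [set i | meval (P i) L == 0]; pose SQ := [set i | meval (P i) Q == 0].
have cover : (8 <= #|SL| + #|SQ|)%N.
  have SLQ : SL :|: SQ = setT.
    by apply/setP => i; rewrite !inE; case: (hLQ i) => ->; rewrite eqxx ?orbT.
  by have := (leq_card_setU SL SQ).1; rewrite SLQ cardsT card_ord.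
have [h3|h6] : (3 <= #|SL|)%N \/ (6 <= #|SQ|)%N by lia.
- have [f [hf hSL]] := exists_inj_ffun_in ord0 h3; case/eqP: nzL.
  by apply: (line_through3_eq0 homL hf) => r; move: (hSL r); rewrite inE => /eqP.
- have [f [hf hSQ]] := exists_inj_ffun_in ord0 h6; case/eqP: nzQ.
  by apply: (conic_through6_eq0 homQ hf) => r; move: (hSQ r); rewrite inE => /eqP.
Qed.

Lemma base_cubic_irreducible F : F \is 3.-homog -> F != 0 -> (forall i, meval (P i) F = 0) ->
  forall G H, F = G * H -> (msize G <= 1)%N \/ (msize H <= 1)%N.
Proof.
move=> homF nzF hF.
suff line_conic G H : F = G * H -> msize G = 2%N -> msize H = 3%N -> False.
  move=> G H eF; case: (leqP (msize G) 1) => sG; first by left.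
  case: (leqP (msize H) 1) => sH; first by right.
  have nzG : G != 0 by apply: contraNneq nzF => G0; rewrite eF G0 mul0r.
  have nzH : H != 0 by apply: contraNneq nzF => H0; rewrite eF H0 mulr0.
  have sGH : ((msize G + msize H).-1 = 4)%N.
    by rewrite -msizeM_proper ?mulf_neq0 ?mleadc_eq0 // -eF (msize_dhomog homF nzF).
  have [[sG2 sH3]|[sG3 sH2]] : (msize G = 2 /\ msize H = 3 \/ msize G = 3 /\ msize H = 2)%N.
    by lia.
  + by case: (line_conic G H eF sG2 sH3).
  + by case: (line_conic H G _ sH2 sG3); rewrite mulrC.
move=> eF sG sH.
have eF' : F = pihomog mdeg 1 G * pihomog mdeg 2 H by rewrite eF dhomog3_factor -?eF ?sG ?sH.
have nzG1 : pihomog mdeg 1 G != 0 by apply: contraNneq nzF => G0; rewrite eF' G0 mul0r.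
have nzH2 : pihomog mdeg 2 H != 0 by apply: contraNneq nzF => H0; rewrite eF' H0 mulr0.
apply: (base_not_on_line_conic (pihomogP mdeg 1 G) nzG1 (pihomogP mdeg 2 H) nzH2) => i.
by move: (hF i); rewrite eF' mevalM => /eqP; rewrite mulf_eq0 => /orP [] /eqP; auto.
Qed.

Lemma base_cubic_singular_proj_eq F p p' : F \is 3.-homog -> F != 0 ->
  (forall i, meval (P i) F = 0) -> nz p -> nz p' ->
  singular_at F p -> singular_at F p' -> proj_eq p p'.
Proof.
move=> homF nzF hF hp hp' sp sp'; apply: NNPP => npp.
have [k hk] : exists k, det3 p p' (unit_vec k) != 0.
  apply: det3_unit_vec_neq0 => // -[c hc]; apply: npp; exists c; split => //.
  by apply/negP => /eqP c0; case: hp' => l; rewrite hc c0 mul0r eqxx.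
have [Q eF] := cubic_two_singular_factor homF sp sp' hk.
have [/msize1_polyC eL|/msize1_polyC eQ] := base_cubic_irreducible homF nzF hF eF.
  have L0 := meval_det3R_xvec (fun _ => 0) p p'.
  have Lk := meval_det3R_xvec (unit_vec k) p p'.
  rewrite eL !mevalC in L0 Lk; move/eqP: hk; apply.
  by rewrite -Lk L0 det3E /det3R; ring.
(* [F] would be a linear form times a constant [c]; comparing [F (2 e_k)] with
   [F (e_k)] gives [8 c D = 2 c D] with [D = det3 p p' e_k != 0]. *)
set c := Q@_0 in eQ; set e := unit_vec k.
have Fv v : meval v F = det3 p p' v * c by rewrite eF eQ mevalM mevalC meval_det3R_xvec.
have := cubic_scale (fun m => F@_m) 2 e; rewrite -!meval_cubic // !Fv.
have -> : det3 p p' (fun l => 2 * e l) = 2 * det3 p p' e by rewrite !det3E /det3R; ring.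
move=> /eqP; rewrite -subr_eq0.
have -> : 2 * det3 p p' e * c - 2 ^+ 3 * (det3 p p' e * c) = - 6%:R * (det3 p p' e * c) by ring.
rewrite mulf_eq0 oppr_eq0 Num.Theory.pnatr_eq0 mulf_eq0 (negbTE hk) /= => /eqP c0.
by case/eqP: nzF; rewrite eF eQ c0 mpolyC0 mulr0.
Qed.

End GeneralPosition.

(** * Divisors in |d L_8| *)

Lemma has_curve_weaken P d m m' Z : (m' <= m)%N -> has_curve P d m Z -> has_curve P d m' Z.
Proof.
move=> le [F [secF hZ]]; exists F; split => // -[p|i w] /hZ /= h.
  exact: pmult_ge_weaken h.
by move=> u hu mon hmon; apply: (h u hu mon); apply: leq_trans hmon _; rewrite leq_add2r.
Qed.

Lemma no_section0 P m Z : (forall i, nz (P i)) -> (0 < m)%N ->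
  (forall q, List.In q Z -> valid_pt P q) -> Z <> [::] -> ~ has_curve P 0 m Z.
Proof.
move=> hP hm hv hZ [F [[homF [nzF _]] hq]].
have eF : F = (F@_0)%:MP by apply: msize1_polyC; rewrite (msize_dhomog homF nzF).
have nzc : F@_0 != 0 by apply: contraNneq nzF => c0; rewrite eF c0 mpolyC0.
case: Z hZ hv hq => [//|q Z] _ /(_ q (or_introl erefl)) + /(_ q (or_introl erefl)).
case: q => [p [hp _]|i w nprop] /= hm0.
- have [w [u hwu]] := det3_completion hp.
  have := hm0 w u hwu 0%MM; rewrite mdeg0 mcoeff0_chart eF mevalC => /(_ hm) c0.
  by rewrite c0 eqxx in nzc.
- have [k hk] := det3_unit_vec_neq0 (hP i) nprop.
  have := hm0 _ hk 0%MM; rewrite mdeg0 addn0 mcoeff0_bchart eF mevalC => /(_ hm) c0.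
  by rewrite c0 eqxx in nzc.
Qed.

Lemma is_alpha1 P m Z : (forall i, nz (P i)) -> (0 < m)%N ->
  (forall q, List.In q Z -> valid_pt P q) -> Z <> [::] ->
  has_curve P 1 m Z -> is_alpha P m Z 1.
Proof. by move=> hP hm hv hZ h1; split => // -[|//] _; apply: no_section0. Qed.

Lemma has_curve12_singular_cubic P Z : (forall i, nz (P i)) ->
  meval (coords P) genericity_poly != 0 -> Z <> [::] ->
  (forall q, List.In q Z -> valid_pt P q) -> has_curve P 1 2 Z ->
  exists Q : spt,
    valid_pt P Q /\ (forall q, List.In q Z -> pt_eq P q Q) /\
    (forall i, ~ proj_eq (P i) (fpt P Q)) /\
    exists F : {mpoly C[3]},
      irreducible_cubic F /\ (forall i, meval (P i) F = 0) /\ pmult_ge F (fpt P Q) 2.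
Proof.
move=> hP genP hZ hv [F [[homF [nzF hPi]] hq]].
have hF i : meval (P i) F = 0 := pmult_ge1_root (hP i) (hPi i).
have off q : List.In q Z ->
    exists2 p, q = Off p & [/\ nz p, forall i, ~ proj_eq (P i) p & singular_at F p].
  move=> qZ; move: (hv q qZ) (hq q qZ); case: q {qZ} => [p [hp hpP] hm|i w nprop hm] /=.
    by exists p => //; split => //; apply: pmult_ge2_singular.
  case/eqP: nzF; apply: (base_cubic_singular_eq0 genP (i := i)) => //.
  exact: exc_mult_ge2_singular homF (hP i) (hF i) nprop hm.
have [q0 q0Z] : exists q0, List.In q0 Z by case: Z hZ {hv hq off} => // q0 Z _; exists q0; left.
have [p0 eq0 [hp0 hp0P sp0]] := off q0 q0Z.
exists (Off p0); split; first by [].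
split=> [q /off [p -> [hp _ sp]] /=|].
  exact: (base_cubic_singular_proj_eq genP homF nzF hF hp hp0 sp sp0).
split=> //; exists F; split.
  by split=> //; split=> //; apply: (base_cubic_irreducible genP homF nzF hF).
by split=> //; have := hq _ q0Z; rewrite eq0.
Qed.

Lemma singular_cubic_has_curve12 P Z Q F :
  (forall q, List.In q Z -> pt_eq P q Q) -> (forall i, ~ proj_eq (P i) (fpt P Q)) ->
  irreducible_cubic F -> (forall i, meval (P i) F = 0) -> pmult_ge F (fpt P Q) 2 ->
  has_curve P 1 2 Z.
Proof.
case: Q => [p0|i w] hZ hQP [homF [nzF _]] hF sing; last first.
  by case: (hQP i); exists 1; split=> [|k]; rewrite ?oner_neq0 ?mul1r.
exists F; split.
  split=> //; split=> // i w u _ mon; rewrite ltnS leqn0 mdeg_eq0 => /eqP ->.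
  by rewrite mcoeff0_chart hF.
move=> [p|j w] /hZ //= [c [nzc hc]].
apply: (pmult_ge_scale homF nzc).
by have -> : (fun l => c * p l) = p0 by apply: functional_extensionality => l; rewrite hc.
Qed.

Theorem theorem13 :
  exists G : {mpoly C[24]}, G != 0 /\
  forall P : 'I_8 -> vec, (forall i, nz (P i)) -> meval (coords P) G != 0 ->
  forall Z : seq spt, Z <> [::] -> (forall q, List.In q Z -> valid_pt P q) ->
  ((is_alpha P 1 Z 1 /\ is_alpha P 2 Z 1) <->
   exists Q : spt,
     valid_pt P Q /\ (forall q, List.In q Z -> pt_eq P q Q) /\
     (forall i, ~ proj_eq (P i) (fpt P Q)) /\
     exists F : {mpoly C[3]},
       irreducible_cubic F /\ (forall i, meval (P i) F = 0) /\
       pmult_ge F (fpt P Q) 2).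
Proof.
exists genericity_poly; split; first exact: genericity_poly_neq0.
move=> P hP genP Z hZ hv; split.
  by case=> _ [/(has_curve12_singular_cubic hP genP hZ hv)].
case=> Q [_ [hZQ [hQP [F [irrF [hF sing]]]]]].
have h2 := singular_cubic_has_curve12 hZQ hQP irrF hF sing.
by split; apply: is_alpha1 => //; apply: has_curve_weaken h2.
Qed.
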